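(* Let $d,k\ge 1$, let $g:\mathbb{R}^{k}\to\mathbb{R}$ be differentiable, and for $B\in\mathbb{R}^{k\times d}$ consider $f(z)=g(Bz)$, $f:\mathbb{R}^d\to\mathbb{R}$. Given one training sample $(x,y)\in\mathbb{R}^d\times\mathbb{R}$, suppose $f$ is trained to minimize $\frac{1}{2}(y-f(x))^2$ by gradient descent on $B$ with learning rate $\eta>0$, i.e. $B^{(t+1)}=B^{(t)}-\eta\,\nabla_B\big[\tfrac12(y-g(B^{(t)}x))^2\big]$. Let $B^{(t)}$ denote $B$ after $t$ steps and $f_t(z):=g(B^{(t)}z)$. If $B^{(0)}=\mathbf{0}$, then for every time step $t$ and every $z\in\mathbb{R}^d$, $$\nabla f_t(z)\,\nabla f_t(z)^T \propto {B^{(t)}}^T B^{(t)},$$ i.e. $\nabla f_t(z)\nabla f_t(z)^T$ is a scalar multiple of ${B^{(t)}}^TB^{(t)}$.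
   Context: $\nabla f_t(z)\in\mathbb{R}^d$ denotes the gradient of $f_t$ with respect to its input $z$. ''$P\propto Q$'' for matrices means $P=cQ$ for some scalar $c$. *)

From HB Require Import structures.
From mathcomp Require Import all_boot all_order all_algebra.
From mathcomp Require Import all_classical all_reals all_analysis.
Set Implicit Arguments. Unset Strict Implicit. Unset Printing Implicit Defensive.
Import Order.TTheory GRing.Theory Num.Theory.
Import numFieldNormedType.Exports.
Local Open Scope ring_scope.

(* Gradient of a real-valued function of a matrix argument (vectors being
   m x 1 matrices): the matrix of partial derivatives
   (mgrad F A) i j = dF/dA_ij (A), the directional derivative along delta_mx i j. *)
Definition mgrad (R : realType) (m n : nat) (F : 'M[R]_(m, n) -> R)
  (A : 'M[R]_(m, n)) : 'M[R]_(m, n) :=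
  \matrix_(i, j) 'D_(delta_mx i j) F A.

Definition sqloss (R : realType) (d k : nat) (g : 'cV[R]_k -> R)
  (x : 'cV[R]_d) (y : R) (B : 'M[R]_(k, d)) : R :=
  (y - g (B *m x)) ^+ 2 / 2.

Fixpoint gd_iter (R : realType) (d k : nat) (g : 'cV[R]_k -> R)
  (x : 'cV[R]_d) (y eta : R) (t : nat) : 'M[R]_(k, d) :=
  match t with
  | 0 => 0
  | t'.+1 => gd_iter g x y eta t' - eta *: mgrad (sqloss g x y) (gd_iter g x y eta t')
  end.

Definition f_t (R : realType) (d k : nat) (g : 'cV[R]_k -> R)
  (x : 'cV[R]_d) (y eta : R) (t : nat) (z : 'cV[R]_d) : R :=
  g (gd_iter g x y eta t *m z).

From HB Require Import structures.
From mathcomp Require Import all_boot all_order all_algebra.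
From mathcomp Require Import all_classical all_reals all_analysis.
Import Order.TTheory GRing.Theory Num.Theory.
Import numFieldNormedType.Exports.
Local Open Scope ring_scope.

(* Gradient descent on B from B = 0 only ever adds multiples of the loss
   gradient, which by the chain rule has the form v x^T; hence every iterate is
   B = u x^T.  The chain rule also gives grad f_t (z) = B^T w for some w, and
   for a rank-one B = u x^T both B^T w (B^T w)^T = (u.w)^2 x x^T and
   B^T B = |u|^2 x x^T are multiples of x x^T, with u.w = 0 whenever u = 0. *)

Section DirectionalDerivative.
Context {R : realType}.

Lemma derive_comp_linear {U V : normedModType R} (G : V -> R)
    (L : {linear U -> V}) (v a : U) :
  'D_v (G \o L) a = 'D_(L v) G (L a).
Proof.
rewrite /derive; do 2 f_equal; apply/funext => h /=.
by rewrite /shift /= addrC linearP addrC.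
Qed.

Lemma deriveZ_dir {V : normedModType R} (G : V -> R) (c : R) (v a : V) :
  differentiable G a -> 'D_(c *: v) G a = c * 'D_v G a.
Proof. by move=> dG; rewrite !deriveE // linearZ. Qed.

Lemma derive_mgrad {m n : nat} (F : 'M[R]_(m, n) -> R) (A V : 'M[R]_(m, n)) :
  differentiable F A ->
  'D_V F A = \sum_i \sum_j V i j * mgrad F A i j.
Proof.
move=> dF; rewrite [in LHS](matrix_sum_delta V) deriveE // linear_sum.
apply: eq_bigr => i _; rewrite linear_sum; apply: eq_bigr => j _.
by rewrite linearZ -deriveE // mxE.
Qed.

End DirectionalDerivative.

Lemma mul_delta_mx_col (R : comRingType) (m n : nat) (i : 'I_m) (j : 'I_n)
    (x : 'cV[R]_n) :
  delta_mx i j *m x = x j 0 *: delta_mx i 0.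
Proof.
rewrite -(mul_delta_mx (0 : 'I_1)) -mulmxA -rowE [row j x]mx11_scalar.
by rewrite mul_mx_scalar mxE.
Qed.

Section MatrixGradientChainRule.
Context {R : realType} {m n : nat}.

Lemma mgrad_comp_mulmxr (G : 'cV[R]_m -> R) (x : 'cV[R]_n) (B : 'M[R]_(m, n)) :
  differentiable G (B *m x) ->
  mgrad (fun M => G (M *m x)) B = mgrad G (B *m x) *m x^T.
Proof.
move=> dG; apply/matrixP => i j; rewrite !mxE big_ord1 !mxE.
rewrite (derive_comp_linear G (mulmxr x)) /= mul_delta_mx_col deriveZ_dir //.
by rewrite mulrC.
Qed.

Lemma mgrad_comp_mulmx (G : 'cV[R]_m -> R) (A : 'M[R]_(m, n)) (z : 'cV[R]_n) :
  differentiable G (A *m z) ->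
  mgrad (fun w => G (A *m w)) z = A^T *m mgrad G (A *m z).
Proof.
move=> dG; apply/matrixP => j o; rewrite !mxE ord1.
rewrite (derive_comp_linear G (mulmx A)) /= derive_mgrad //.
by apply: eq_bigr => i _; rewrite big_ord1 -colE !mxE.
Qed.

End MatrixGradientChainRule.

Section RankOne.
Variable R : realFieldType.

Lemma trmx_mul_self_eq0 n (u : 'cV[R]_n) : ((u^T *m u) 0 0 == 0) = (u == 0).
Proof.
rewrite mxE psumr_eq0 => [|i _]; last by rewrite !mxE -expr2 sqr_ge0.
apply/allP/eqP => [u0|-> i _]; last by rewrite !mxE mul0r eqxx.
apply/matrixP => i o; rewrite ord1 !mxE.
by have := u0 i (mem_index_enum i); rewrite !mxE -expr2 sqrf_eq0 => /eqP.
Qed.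

Lemma trmx_rank1_mul m n (u v : 'cV[R]_m) (w : 'cV[R]_n) :
  (u *m w^T)^T *m v = (u^T *m v) 0 0 *: w.
Proof.
by rewrite trmx_mul trmxK -mulmxA {1}[u^T *m v]mx11_scalar mul_mx_scalar.
Qed.

Lemma rank1_outer_propto_gram m n (u v : 'cV[R]_m) (w : 'cV[R]_n) :
  let M := u *m w^T in
  exists c, (M^T *m v) *m (M^T *m v)^T = c *: (M^T *m M).
Proof.
move=> M; rewrite /M mulmxA !trmx_rank1_mul linearZ /=.
rewrite -!scalemxAl -scalemxAr scalerA.
have [->|u_neq0] := eqVneq u 0.
  by exists 0; rewrite trmx0 mul0mx mxE mul0r !scale0r.
exists ((u^T *m v) 0 0 ^+ 2 / (u^T *m u) 0 0).
by rewrite scalerA divfK ?trmx_mul_self_eq0 // expr2.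
Qed.

End RankOne.

Section GradientDescent.
Context {R : realType} {d k : nat} {g : 'cV[R]_k -> R}.
Hypothesis g_diff : forall a, differentiable g a.
Variables (x : 'cV[R]_d) (y eta : R).

Lemma mgrad_sqloss (B : 'M[R]_(k, d)) :
  mgrad (sqloss g x y) B = mgrad (fun p => (y - g p) ^+ 2 / 2) (B *m x) *m x^T.
Proof.
apply: mgrad_comp_mulmxr.
have -> : (fun p => (y - g p) ^+ 2 / 2) = 2^-1 *: (cst y - g) ^+ 2.
  by apply/funext => p; rewrite /= mulrC.
by apply/differentiableZ/differentiableX/differentiableB.
Qed.

Lemma gd_iter_rank1 t : exists u : 'cV[R]_k, gd_iter g x y eta t = u *m x^T.
Proof.
elim: t => [|t [u Bt]] /=; first by exists 0; rewrite mul0mx.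
rewrite mgrad_sqloss Bt; set v := mgrad _ _.
by exists (u - eta *: v); rewrite mulmxBl scalemxAl.
Qed.

Lemma mgrad_f_t t z :
  mgrad (f_t g x y eta t) z
  = (gd_iter g x y eta t)^T *m mgrad g (gd_iter g x y eta t *m z).
Proof. exact: mgrad_comp_mulmx. Qed.

End GradientDescent.

Theorem proposition1 (R : realType) (d k : nat) (hd : (1 <= d)%N) (hk : (1 <= k)%N)
  (g : 'cV[R]_k -> R) (hg : forall a : 'cV[R]_k, differentiable g a)
  (x : 'cV[R]_d) (y eta : R) (heta : 0 < eta) (t : nat) (z : 'cV[R]_d) :
  exists c : R,
    mgrad (f_t g x y eta t) z *m (mgrad (f_t g x y eta t) z)^T
    = c *: ((gd_iter g x y eta t)^T *m gd_iter g x y eta t).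
Proof.
rewrite mgrad_f_t //; have [u ->] := gd_iter_rank1 hg x y eta t.
exact: rank1_outer_propto_gram.
Qed.
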